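(* Let $\alpha\in(0,\pi)$ and let $G\subset S_\alpha$ be a domain such that for some $r>0$, \[ G\cap B^2(r)=S_\alpha\cap B^2(r). \] Then $A_G\ge A_{S_\alpha}$.
   Context: $S_\alpha=\{\rho e^{it}:\rho>0,\ t\in(0,\alpha)\}\subset\mathbb{R}^2=\mathbb{C}$, and $B^2(r)$ is the open disk of radius $r$ centered at the origin. For a domain $G\subsetneq\mathbb{R}^n$ let $d_G(x)=d(x,\partial G)$; $k_G(x,y)=\inf_\gamma\int_\gamma\frac{|dx|}{d_G(x)}$ over rectifiable curves $\gamma\subset G$ joining $x,y$ (quasihyperbolic distance); $j_G(x,y)=\log\left(1+\frac{|x-y|}{\min\{d_G(x),d_G(y)\}}\right)$; and $A_G=\inf\{A\ge1: k_G\le A\,j_G\text{ on }G\times G\}$ (with $\inf\emptyset=+\infty$). *)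

From Stdlib Require Import Reals Lra ClassicalEpsilon.
Open Scope R_scope.

(** Extended nonnegative values: [Some r] is a real, [None] is +infinity. *)
Definition ER := option R.

Definition er_le (a b : ER) : Prop :=
  match a, b with
  | _, None => True
  | None, Some _ => False
  | Some x, Some y => x <= y
  end.

(** Supremum of a set of reals: [Some] of the lub when the set is nonempty and
    bounded above, [None] (= +oo) otherwise (only used on nonempty sets). *)
Definition sup_opt (E : R -> Prop) : ER :=
  match excluded_middle_informative (bound E /\ exists x, E x) with
  | left H => Some (proj1_sig (completeness E (proj1 H) (proj2 H)))
  | right _ => None
  end.

(** Infimum of a set of reals: [None] (= +oo) for the empty set; the glb
    otherwise (only used on sets bounded below, so [None] never means -oo). *)
Definition inf_opt (E : R -> Prop) : ER :=
  match sup_opt (fun x => E (- x)) with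
  | Some m => Some (- m)
  | None => None
  end.

(** Real-valued infimum (default 0 when not attained as a real). *)
Definition Rinf (E : R -> Prop) : R :=
  match inf_opt E with Some r => r | None => 0 end.

Definition pt := (R * R)%type.
Definition pdist (p q : pt) : R :=
  sqrt ((fst p - fst q) ^ 2 + (snd p - snd q) ^ 2).
Definition origin : pt := (0, 0).

Definition is_open (G : pt -> Prop) : Prop :=
  forall z, G z -> exists eps, 0 < eps /\ forall w, pdist z w < eps -> G w.

Definition is_connected (G : pt -> Prop) : Prop :=
  ~ exists U V : pt -> Prop,
      is_open U /\ is_open V /\
      (forall z, G z -> U z \/ V z) /\
      (exists z, G z /\ U z) /\ (exists z, G z /\ V z) /\
      ~ (exists z, G z /\ U z /\ V z).

Definition domain (G : pt -> Prop) : Prop :=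
  (exists z, G z) /\ is_open G /\ is_connected G.

Definition sector (alpha : R) (z : pt) : Prop :=
  exists rho t, 0 < rho /\ 0 < t < alpha /\ z = (rho * cos t, rho * sin t).

Definition boundary (G : pt -> Prop) (z : pt) : Prop :=
  forall eps, 0 < eps ->
    (exists u, G u /\ pdist z u < eps) /\ (exists u, ~ G u /\ pdist z u < eps).

Definition dG (G : pt -> Prop) (x : pt) : R :=
  Rinf (fun d => exists z, boundary G z /\ d = pdist x z).

Definition curve_in (G : pt -> Prop) (gamma : R -> pt) (x y : pt) : Prop :=
  gamma 0 = x /\ gamma 1 = y /\
  (forall t, 0 <= t <= 1 -> G (gamma t)) /\
  (forall t, 0 <= t <= 1 -> forall eps, 0 < eps -> exists delta, 0 < delta /\
     forall s, 0 <= s <= 1 -> Rabs (s - t) < delta -> pdist (gamma s) (gamma t) < eps).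

Fixpoint rsum (f : nat -> R) (n : nat) : R :=
  match n with O => 0 | S k => rsum f k + f k end.

Definition partition (P : nat -> R) (n : nat) : Prop :=
  P O = 0 /\ P n = 1 /\ (forall i, (i < n)%nat -> P i <= P (S i)).

Definition chord_sum (gamma : R -> pt) (P : nat -> R) (n : nat) : R :=
  rsum (fun i => pdist (gamma (P i)) (gamma (P (S i)))) n.

Definition rectifiable (gamma : R -> pt) : Prop :=
  exists M, forall P n, partition P n -> chord_sum gamma P n <= M.

(** Line integral of a nonnegative continuous f w.r.t. arc length along gamma:
    supremum over partitions of  sum_i (inf_{[P i, P (i+1)]} f o gamma) * |gamma(P(i+1)) - gamma(P i)|. *)
Definition lower_sum (f : pt -> R) (gamma : R -> pt) (P : nat -> R) (n : nat) : R :=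
  rsum (fun i =>
          Rinf (fun v => exists t, P i <= t <= P (S i) /\ v = f (gamma t))
          * pdist (gamma (P i)) (gamma (P (S i)))) n.

Definition line_integral (f : pt -> R) (gamma : R -> pt) : ER :=
  sup_opt (fun v => exists P n, partition P n /\ v = lower_sum f gamma P n).

Definition k_G (G : pt -> Prop) (x y : pt) : ER :=
  inf_opt (fun v => exists gamma, curve_in G gamma x y /\ rectifiable gamma /\
             line_integral (fun z => / dG G z) gamma = Some v).

Definition j_G (G : pt -> Prop) (x y : pt) : R :=
  ln (1 + pdist x y / Rmin (dG G x) (dG G y)).

Definition A_G (G : pt -> Prop) : ER :=
  inf_opt (fun A => 1 <= A /\
     forall x y, G x -> G y -> er_le (k_G G x y) (Some (A * j_G G x y))).

(* The sector S is invariant under dilations z -> lam z, and k_S, j_S are invariant under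
   them.  Given x, y in S, shrink them by a small lam into the disk of radius r/2, where G
   agrees with S and hence d_G = d_S and j_G = j_S.  Since G is a subset of S we have
   d_G <= d_S everywhere on G, so k_S <= k_G; therefore
   k_S(x,y) = k_S(lam x, lam y) <= k_G(lam x, lam y) <= A j_G(lam x, lam y) = A j_S(x,y)
   for every A admissible for G. *)

From Stdlib Require Import Reals Lra Lia Rgeom Classical ClassicalEpsilon FunctionalExtensionality PropExtensionality.
Open Scope R_scope.

Lemma sup_opt_some (E : R -> Prop) :
  bound E -> (exists x, E x) -> exists m, sup_opt E = Some m /\ is_lub E m.
Proof.
  intros Hb He. unfold sup_opt.
  destruct (excluded_middle_informative _) as [H|H]; [|tauto].
  destruct (completeness E _ _) as [m Hm]; simpl. eauto.
Qed.

Lemma sup_opt_SomeP (E : R -> Prop) m :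
  sup_opt E = Some m -> is_lub E m /\ exists x, E x.
Proof.
  unfold sup_opt. destruct (excluded_middle_informative _) as [H|H]; [|discriminate].
  destruct (completeness E _ _) as [m' Hm]; simpl. intros [= <-]. split; [exact Hm|apply H].
Qed.

Lemma sup_opt_le (E1 E2 : R -> Prop) c :
  (exists x, E2 x) -> (forall v, E2 v -> exists w, E1 w /\ v <= w) ->
  sup_opt E1 = Some c -> exists c', sup_opt E2 = Some c' /\ c' <= c.
Proof.
  intros Hne Hdom H1. apply sup_opt_SomeP in H1 as [[H1u _] _].
  assert (Hc : forall x, E2 x -> x <= c).
  { intros x Hx. destruct (Hdom x Hx) as [w [Hw Hle]]. specialize (H1u w Hw). lra. }
  destruct (sup_opt_some E2) as [c' [H2 [_ H2l]]]; [now exists c|auto|].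
  exists c'. split; [exact H2|]. apply H2l. exact Hc.
Qed.

Lemma inf_opt_some (E : R -> Prop) :
  (exists x, E x) -> (exists b, forall x, E x -> b <= x) ->
  exists m, inf_opt E = Some m /\ (forall x, E x -> m <= x) /\
    (forall b, (forall x, E x -> b <= x) -> b <= m).
Proof.
  intros [x0 Hx0] [b Hb]. unfold inf_opt.
  destruct (sup_opt_some (fun x => E (- x))) as [m [-> [Hu Hl]]].
  - exists (- b). intros y Hy. apply Hb in Hy. unfold Rge. lra.
  - exists (- x0). now rewrite Ropp_involutive.
  - exists (- m). split; [reflexivity|]. split.
    + intros x Hx. assert (- x <= m) by (apply Hu; now rewrite Ropp_involutive). lra.
    + intros b' Hb'. assert (m <= - b'); [|lra].
      apply Hl. intros y Hy. apply Hb' in Hy. lra.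
Qed.

Lemma inf_opt_SomeP (E : R -> Prop) m :
  inf_opt E = Some m ->
  (exists x, E x) /\ (forall x, E x -> m <= x) /\
  (forall b, (forall x, E x -> b <= x) -> b <= m).
Proof.
  unfold inf_opt. destruct (sup_opt (fun x => E (- x))) as [m'|] eqn:Hs; [|discriminate].
  intros [= <-]. apply sup_opt_SomeP in Hs as [[Hu Hl] [x Hx]].
  split; [eauto|]. split.
  - intros y Hy. assert (- y <= m') by (apply Hu; now rewrite Ropp_involutive). lra.
  - intros b Hb. assert (m' <= - b); [|lra]. apply Hl. intros y Hy. apply Hb in Hy. lra.
Qed.

Lemma inf_opt_empty (E : R -> Prop) : ~ (exists x, E x) -> inf_opt E = None.
Proof.
  intros He. unfold inf_opt, sup_opt.
  destruct (excluded_middle_informative _) as [H|_]; [|reflexivity].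
  exfalso. destruct H as [_ [x Hx]]. apply He. eauto.
Qed.

Lemma inf_opt_le (E1 E2 : R -> Prop) b c :
  (forall x, E1 x -> b <= x) -> (forall v, E2 v -> exists w, E1 w /\ w <= v) ->
  inf_opt E2 = Some c -> exists c', inf_opt E1 = Some c' /\ c' <= c.
Proof.
  intros Hb Hdom H2. apply inf_opt_SomeP in H2 as [[v Hv] [_ H2l]].
  destruct (Hdom v Hv) as [w [Hw _]].
  destruct (inf_opt_some E1) as [c' [H1 [H1u _]]]; eauto.
  exists c'. split; [exact H1|]. apply H2l. intros x Hx.
  destruct (Hdom x Hx) as [w' [Hw' Hle]]. specialize (H1u w' Hw'). lra.
Qed.

Lemma Rinf_glb (E : R -> Prop) :
  (exists x, E x) -> (exists b, forall x, E x -> b <= x) ->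
  (forall x, E x -> Rinf E <= x) /\ (forall b, (forall x, E x -> b <= x) -> b <= Rinf E).
Proof.
  intros He Hb. destruct (inf_opt_some E He Hb) as [m [Hm Hglb]].
  unfold Rinf. now rewrite Hm.
Qed.

Lemma Rinf_ge0 (E : R -> Prop) : (forall x, E x -> 0 <= x) -> 0 <= Rinf E.
Proof.
  intros H. destruct (classic (exists x, E x)) as [He|He].
  - apply (Rinf_glb E He (ex_intro _ 0 H)). exact H.
  - unfold Rinf. rewrite inf_opt_empty by exact He. lra.
Qed.

Lemma Rinf_le (E1 E2 : R -> Prop) :
  (forall x, E1 x -> 0 <= x) -> (exists v, E2 v) ->
  (forall v, E2 v -> exists w, E1 w /\ w <= v) -> Rinf E1 <= Rinf E2.
Proof.
  intros H0 He2 Hdom.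
  destruct (inf_opt_some E2) as [c [Hc2 _]]; [exact He2| |].
  { exists 0. intros x Hx. destruct (Hdom x Hx) as [w [Hw Hle]]. specialize (H0 w Hw). lra. }
  destruct (inf_opt_le E1 E2 0 c H0 Hdom Hc2) as [c' [Hc1 Hle]].
  unfold Rinf. now rewrite Hc1, Hc2.
Qed.

Lemma Rinf_scale (E : R -> Prop) c : 0 < c -> (forall x, E x -> 0 <= x) ->
  Rinf (fun v => exists u, E u /\ v = c * u) = c * Rinf E.
Proof.
  intros Hc H0. set (cE := fun v => exists u, E u /\ v = c * u).
  destruct (classic (exists x, E x)) as [[x0 Hx0]|He].
  - destruct (Rinf_glb E (ex_intro _ x0 Hx0) (ex_intro _ 0 H0)) as [Hu Hl].
    destruct (Rinf_glb cE) as [Hu' Hl'].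
    + exists (c * x0), x0. auto.
    + exists 0. intros v [u [Hu1 ->]]. specialize (H0 u Hu1). nra.
    + apply Rle_antisym.
      * assert (/ c * Rinf cE <= Rinf E).
        { apply Hl. intros x Hx.
          assert (Rinf cE <= c * x) by (apply Hu'; exists x; auto).
          assert (/ c * (c * x) = x) by (field; lra).
          assert (0 < / c) by (apply Rinv_0_lt_compat; lra). nra. }
        assert (c * (/ c * Rinf cE) = Rinf cE) by (field; lra). nra.
      * apply Hl'. intros v [u [Hu1 ->]]. apply Rmult_le_compat_l; [lra|auto].
  - unfold Rinf. rewrite !inf_opt_empty; [lra|exact He|].
    intros [v [u [Hu _]]]. apply He. eauto.
Qed.

Definition dilate (c : R) (p : pt) : pt := (c * fst p, c * snd p).

Definition lerp (x z : pt) (s : R) : pt :=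
  (fst x + s * (fst z - fst x), snd x + s * (snd z - snd x)).

Lemma dilate_dilate a b p : dilate a (dilate b p) = dilate (a * b) p.
Proof. unfold dilate; cbn [fst snd]. f_equal; ring. Qed.

Lemma dilate1 p : dilate 1 p = p.
Proof. destruct p; unfold dilate; cbn [fst snd]. f_equal; ring. Qed.

Lemma dilateK c p : c <> 0 -> dilate (/ c) (dilate c p) = p.
Proof. intros. rewrite dilate_dilate, Rinv_l by assumption. apply dilate1. Qed.

Lemma dilate_origin c : dilate c origin = origin.
Proof. unfold dilate, origin; cbn [fst snd]. f_equal; ring. Qed.

Lemma lerp0 x z : lerp x z 0 = x.
Proof. destruct x; unfold lerp; cbn [fst snd]. f_equal; ring. Qed.

Lemma lerp1 x z : lerp x z 1 = z.
Proof. destruct x, z; unfold lerp; cbn [fst snd]. f_equal; ring. Qed.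

Lemma sqrt_norm_scale k u v :
  sqrt ((k * u) ^ 2 + (k * v) ^ 2) = Rabs k * sqrt (u ^ 2 + v ^ 2).
Proof.
  replace ((k * u) ^ 2 + (k * v) ^ 2) with (Rsqr k * (u ^ 2 + v ^ 2)) by (unfold Rsqr; ring).
  rewrite sqrt_mult, sqrt_Rsqr_abs; [reflexivity|apply Rle_0_sqr|nra].
Qed.

Lemma pdist_ge0 p q : 0 <= pdist p q.
Proof. apply sqrt_pos. Qed.

Lemma pdist_sym p q : pdist p q = pdist q p.
Proof. unfold pdist. f_equal. ring. Qed.

Lemma pdist_xx p : pdist p p = 0.
Proof. unfold pdist. rewrite <- sqrt_0. f_equal. ring. Qed.

Lemma pdist_triangle p q w : pdist p q <= pdist p w + pdist w q.
Proof.
  destruct p as [a b], q as [c d], w as [e f].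
  pose proof (triangle a b c d e f) as H. unfold dist_euc, Rsqr in H.
  unfold pdist; simpl. rewrite !Rmult_1_r. exact H.
Qed.

Lemma pdist_dilate c p q : 0 <= c -> pdist (dilate c p) (dilate c q) = c * pdist p q.
Proof.
  intros Hc. unfold pdist, dilate; cbn [fst snd].
  replace (c * fst p - c * fst q) with (c * (fst p - fst q)) by ring.
  replace (c * snd p - c * snd q) with (c * (snd p - snd q)) by ring.
  now rewrite sqrt_norm_scale, Rabs_pos_eq.
Qed.

Lemma pdist_lerp x z a b : pdist (lerp x z a) (lerp x z b) = Rabs (a - b) * pdist x z.
Proof.
  unfold pdist, lerp; cbn [fst snd].
  replace (fst x + a * (fst z - fst x) - (fst x + b * (fst z - fst x)))
    with ((b - a) * (fst x - fst z)) by ring.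
  replace (snd x + a * (snd z - snd x) - (snd x + b * (snd z - snd x)))
    with ((b - a) * (snd x - snd z)) by ring.
  now rewrite sqrt_norm_scale, Rabs_minus_sym.
Qed.

Lemma Rabs_fst_le_pdist p q : Rabs (fst p - fst q) <= pdist p q.
Proof.
  unfold pdist. rewrite <- sqrt_Rsqr_abs. apply sqrt_le_1_alt.
  unfold Rsqr. pose proof (pow2_ge_0 (snd p - snd q)). nra.
Qed.

Lemma Rabs_snd_le_pdist p q : Rabs (snd p - snd q) <= pdist p q.
Proof.
  unfold pdist. rewrite <- sqrt_Rsqr_abs. apply sqrt_le_1_alt.
  unfold Rsqr. pose proof (pow2_ge_0 (fst p - fst q)). nra.
Qed.

Lemma pdist_eq0 p q : pdist p q = 0 -> p = q.
Proof.
  intros H. pose proof (Rabs_fst_le_pdist p q). pose proof (Rabs_snd_le_pdist p q).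
  rewrite H in *. pose proof (Rabs_pos (fst p - fst q)). pose proof (Rabs_pos (snd p - snd q)).
  destruct p as [a b], q as [c d]; cbn [fst snd] in *.
  f_equal.
  - destruct (Req_dec (a - c) 0) as [E|E]; [lra|]. apply Rabs_pos_lt in E. lra.
  - destruct (Req_dec (b - d) 0) as [E|E]; [lra|]. apply Rabs_pos_lt in E. lra.
Qed.

Lemma Rmin_mult_l c a b : 0 < c -> Rmin (c * a) (c * b) = c * Rmin a b.
Proof. intros Hc. unfold Rmin. destruct (Rle_dec (c * a) (c * b)), (Rle_dec a b); nra. Qed.

Lemma Rinv_ge0 x : 0 <= x -> 0 <= / x.
Proof. intros [H|<-]; [now left; apply Rinv_0_lt_compat|rewrite Rinv_0; lra]. Qed.

Lemma sector_halfplanes alpha z : 0 < alpha < PI -> sector alpha z ->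
  0 < snd z /\ 0 < fst z * sin alpha - snd z * cos alpha.
Proof.
  intros Ha [rho [t [Hr [Ht ->]]]]. cbn [fst snd]. split.
  - apply Rmult_lt_0_compat; [exact Hr|apply sin_gt_0; lra].
  - replace (rho * cos t * sin alpha - rho * sin t * cos alpha) with (rho * sin (alpha - t))
      by (rewrite sin_minus; ring).
    apply Rmult_lt_0_compat; [exact Hr|apply sin_gt_0; lra].
Qed.

(* Polar coordinates: [t = acos (a / rho)] is the argument of [(a, b)] when [b > 0]. *)
Lemma halfplanes_sector alpha a b : 0 < alpha < PI ->
  0 < b -> 0 < a * sin alpha - b * cos alpha -> sector alpha (a, b).
Proof.
  intros Ha Hb Hc.
  set (rho := sqrt (a ^ 2 + b ^ 2)).
  assert (Hr2 : rho * rho = a ^ 2 + b ^ 2) by (apply sqrt_sqrt; nra).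
  assert (Hr : 0 < rho) by (apply sqrt_lt_R0; nra).
  assert (Hu : -1 <= a / rho <= 1).
  { split; apply (Rmult_le_reg_r rho); auto; unfold Rdiv;
      rewrite Rmult_assoc, Rinv_l by lra; nra. }
  set (t := acos (a / rho)).
  assert (Hct : cos t = a / rho) by (apply cos_acos; exact Hu).
  assert (Hst : sin t = b / rho).
  { unfold t. rewrite sin_acos by exact Hu.
    replace (1 - (a / rho)²) with ((b / rho)²).
    - apply sqrt_Rsqr. unfold Rdiv. apply Rmult_le_pos; [lra|].
      left; apply Rinv_0_lt_compat; exact Hr.
    - unfold Rsqr. replace 1 with ((a ^ 2 + b ^ 2) / (rho * rho)) at 1 by (rewrite Hr2; field; nra).
      field. lra. }
  assert (Hbr : 0 < b / rho) by (apply Rdiv_lt_0_compat; auto).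
  pose proof (acos_bound (a / rho)) as Htb. fold t in Htb.
  exists rho, t. repeat split; [exact Hr| | |].
  - destruct (Req_dec t 0) as [E|E]; [|lra]. rewrite E, sin_0 in Hst. lra.
  - destruct (Rlt_or_le t alpha) as [L|L]; [exact L|exfalso].
    assert (Hs : 0 <= sin (t - alpha)) by (apply sin_ge_0; lra).
    rewrite sin_minus, Hct, Hst in Hs.
    assert (0 < (a * sin alpha - b * cos alpha) / rho) by (apply Rdiv_lt_0_compat; auto).
    assert ((a * sin alpha - b * cos alpha) / rho = - (b / rho * cos alpha - a / rho * sin alpha))
      by (field; lra).
    lra.
  - f_equal; rewrite ?Hct, ?Hst; field; lra.
Qed.

Lemma sector_iff_halfplanes alpha z : 0 < alpha < PI ->
  (sector alpha z <-> 0 < snd z /\ 0 < fst z * sin alpha - snd z * cos alpha).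
Proof.
  intros Ha. split; [now apply sector_halfplanes|].
  destruct z as [a b]. intros [Hb Hc]. now apply halfplanes_sector.
Qed.

Definition dilation_invariant (U : pt -> Prop) : Prop :=
  forall c p, 0 < c -> (U (dilate c p) <-> U p).

Lemma sector_dilation_invariant alpha : 0 < alpha < PI -> dilation_invariant (sector alpha).
Proof.
  intros Ha c z Hc. rewrite !sector_iff_halfplanes by exact Ha. unfold dilate; cbn [fst snd].
  split; intros [H1 H2]; split; nra.
Qed.

Lemma sector_open alpha : 0 < alpha < PI -> is_open (sector alpha).
Proof.
  intros Ha z Hz. rewrite sector_iff_halfplanes in Hz by exact Ha. destruct Hz as [H1 H2].
  set (c := fst z * sin alpha - snd z * cos alpha) in *.
  exists (Rmin (snd z) (c / 2)). split; [apply Rmin_glb_lt; lra|].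
  intros w Hw. rewrite sector_iff_halfplanes by exact Ha.
  pose proof (Rabs_fst_le_pdist z w). pose proof (Rabs_snd_le_pdist z w).
  pose proof (Rmin_l (snd z) (c / 2)). pose proof (Rmin_r (snd z) (c / 2)).
  pose proof (SIN_bound alpha). pose proof (COS_bound alpha).
  revert H H0. unfold Rabs.
  destruct (Rcase_abs (fst z - fst w)), (Rcase_abs (snd z - snd w)); intros;
    (split; [lra|]); unfold c in *; nra.
Qed.

Lemma origin_notin_sector alpha : ~ sector alpha origin.
Proof.
  intros [rho [t [Hr [_ E]]]]. injection E as E1 E2.
  pose proof (sin2_cos2 t). unfold Rsqr in *.
  assert (rho * rho = 0); [|nra].
  replace (rho * rho) with ((rho * cos t) * (rho * cos t) + (rho * sin t) * (rho * sin t))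
    by (transitivity (rho * rho * (sin t * sin t + cos t * cos t)); [ring|rewrite H; ring]).
  rewrite <- E1, <- E2. ring.
Qed.

Lemma boundary_sector_origin alpha : 0 < alpha < PI -> boundary (sector alpha) origin.
Proof.
  intros Ha eps He. split.
  - exists (eps / 2 * cos (alpha / 2), eps / 2 * sin (alpha / 2)). split.
    + exists (eps / 2), (alpha / 2). repeat split; lra.
    + unfold pdist, origin; cbn [fst snd].
      replace ((0 - eps / 2 * cos (alpha / 2)) ^ 2 + (0 - eps / 2 * sin (alpha / 2)) ^ 2)
        with ((eps / 2)²) by (pose proof (sin2_cos2 (alpha / 2)); unfold Rsqr in *; nra).
      rewrite sqrt_Rsqr; lra.
  - exists origin. split; [apply origin_notin_sector|]. rewrite pdist_xx. exact He.
Qed.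

Lemma boundary_notin_open (U : pt -> Prop) z : is_open U -> boundary U z -> ~ U z.
Proof.
  intros Ho Hb Hz. destruct (Ho z Hz) as [eps [He Hball]].
  destruct (Hb eps He) as [_ [u [Hu Hd]]]. apply Hu, Hball, Hd.
Qed.

(* [s] is the supremum of the initial parameter interval on which the segment stays in [U];
   openness of [U] rules out [lerp x z s] being in [U]. *)
Lemma segment_exit (U : pt -> Prop) x z : is_open U -> U x -> ~ U z ->
  exists s, 0 < s <= 1 /\ ~ U (lerp x z s) /\ forall u, 0 <= u < s -> U (lerp x z u).
Proof.
  intros Ho Hx Hz.
  assert (HD : 0 < pdist x z).
  { destruct (pdist_ge0 x z) as [H|H]; [exact H|].
    symmetry in H. apply pdist_eq0 in H. subst. contradiction. }
  set (T := fun s => 0 <= s <= 1 /\ forall u, 0 <= u <= s -> U (lerp x z u)).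
  assert (HT0 : T 0).
  { split; [lra|]. intros u Hu. replace u with 0 by lra. now rewrite lerp0. }
  assert (HTb : bound T) by (exists 1; intros s Hs; apply Hs).
  destruct (completeness T HTb (ex_intro _ 0 HT0)) as [s [Hub Hlub]].
  assert (Hs0 : 0 <= s) by (apply Hub; exact HT0).
  assert (Hs1 : s <= 1) by (apply Hlub; intros s' Hs'; apply Hs').
  assert (Hbelow : forall u, 0 <= u < s -> U (lerp x z u)).
  { intros u Hu. destruct (classic (exists s', T s' /\ u < s')) as [[s' [Ts' Hlt]]|Hn].
    - apply Ts'. lra.
    - assert (s <= u); [|lra]. apply Hlub. intros s' Ts'.
      destruct (Rle_or_lt s' u); [assumption|]. exfalso; apply Hn; eauto. }
  assert (Hout : ~ U (lerp x z s)).
  { intros Hw. destruct (Ho _ Hw) as [eps [He Hball]].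
    destruct (Req_dec s 1) as [E|E]; [rewrite E, lerp1 in Hw; contradiction|].
    set (h := eps / (2 * pdist x z)).
    assert (Hh : 0 < h) by (apply Rdiv_lt_0_compat; lra).
    assert (Hhd : h * pdist x z = eps / 2) by (unfold h; field; lra).
    set (s' := Rmin 1 (s + h)).
    assert (s < s') by (apply Rmin_glb_lt; lra).
    assert (s' <= s); [|lra].
    apply Hub. split; [split; [apply Rmin_glb; lra|apply Rmin_l]|].
    intros u Hu. destruct (Rlt_or_le u s) as [L|L]; [apply Hbelow; lra|].
    apply Hball. rewrite pdist_lerp, Rabs_minus_sym, Rabs_pos_eq by lra.
    assert (u <= s + h) by (pose proof (Rmin_r 1 (s + h)); unfold s' in Hu; lra).
    assert ((u - s) * pdist x z <= h * pdist x z) by (apply Rmult_le_compat_r; lra).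
    lra. }
  exists s. repeat split; [|exact Hs1|exact Hout|exact Hbelow].
  destruct Hs0 as [H|H]; [exact H|]. subst s. rewrite lerp0 in Hout. contradiction.
Qed.

Lemma boundary_on_segment (U : pt -> Prop) x z : is_open U -> U x -> ~ U z ->
  exists w, boundary U w /\ pdist x w <= pdist x z.
Proof.
  intros Ho Hx Hz. destruct (segment_exit U x z Ho Hx Hz) as [s [Hs [Hout Hin]]].
  exists (lerp x z s). split.
  - intros eps He. split.
    + set (h := eps / (2 * (1 + pdist x z))).
      assert (Hh : 0 < h) by (apply Rdiv_lt_0_compat; pose proof (pdist_ge0 x z); lra).
      assert (Hhd : h * pdist x z < eps).
      { assert (h * (1 + pdist x z) = eps / 2) by (unfold h; field; pose proof (pdist_ge0 x z); lra).
        pose proof (pdist_ge0 x z). nra. }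
      set (u := Rmax 0 (s - h)).
      assert (Hu : 0 <= u < s) by (split; [apply Rmax_l|apply Rmax_lub_lt; lra]).
      exists (lerp x z u). split; [now apply Hin|].
      rewrite pdist_lerp, Rabs_pos_eq by lra.
      assert (s - h <= u) by apply Rmax_r.
      assert ((s - u) * pdist x z <= h * pdist x z)
        by (apply Rmult_le_compat_r; [apply pdist_ge0|lra]).
      lra.
    + exists (lerp x z s). split; [exact Hout|]. now rewrite pdist_xx.
  - rewrite <- (lerp0 x z) at 1. rewrite pdist_lerp.
    rewrite Rabs_minus_sym, Rabs_pos_eq by lra. pose proof (pdist_ge0 x z). nra.
Qed.

Lemma dG_ge0 (U : pt -> Prop) x : 0 <= dG U x.
Proof. apply Rinf_ge0. intros d [z [_ ->]]. apply pdist_ge0. Qed.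

Lemma dG_gt0 (U : pt -> Prop) x : is_open U -> U x -> (exists z, boundary U z) -> 0 < dG U x.
Proof.
  intros Ho Hx [z0 Hz0]. destruct (Ho x Hx) as [eps [He Hball]].
  destruct (Rinf_glb (fun d => exists z, boundary U z /\ d = pdist x z)) as [_ Hglb].
  - exists (pdist x z0), z0. auto.
  - exists 0. intros d [z [_ ->]]. apply pdist_ge0.
  - assert (eps <= dG U x); [|lra]. apply Hglb.
    intros d [z [Hz ->]]. destruct (Rle_or_lt eps (pdist x z)) as [L|L]; [exact L|].
    exfalso. apply (boundary_notin_open U z Ho Hz), Hball, L.
Qed.

Lemma boundary_exists_of_sub (G S : pt -> Prop) x z : is_open G -> is_open S ->
  (forall p, G p -> S p) -> G x -> boundary S z -> exists w, boundary G w.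
Proof.
  intros HoG HoS Hsub Hx Hz.
  assert (~ G z) by (intros H; apply (boundary_notin_open S z HoS Hz), Hsub, H).
  destruct (boundary_on_segment G x z HoG Hx H) as [w [Hw _]]. eauto.
Qed.

(* Every boundary point of [V] lies outside [U], and the segment towards it meets [bd U] earlier. *)
Lemma dG_le_sub (U V : pt -> Prop) x : is_open U -> is_open V ->
  (forall z, U z -> V z) -> U x -> (exists z, boundary V z) -> dG U x <= dG V x.
Proof.
  intros HoU HoV Hsub Hx [z0 Hz0]. apply Rinf_le.
  - intros d [z [_ ->]]. apply pdist_ge0.
  - exists (pdist x z0), z0. auto.
  - intros v [z [Hz ->]].
    assert (~ U z) by (intros H; apply (boundary_notin_open V z HoV Hz), Hsub, H).
    destruct (boundary_on_segment U x z HoU Hx H) as [w [Hw Hle]].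
    exists (pdist x w). split; [exists w; auto|exact Hle].
Qed.

Lemma boundary_dilate (U : pt -> Prop) c z : dilation_invariant U -> 0 < c ->
  boundary U z -> boundary U (dilate c z).
Proof.
  intros Hinv Hc Hb eps He.
  assert (He' : 0 < eps / c) by (apply Rdiv_lt_0_compat; auto).
  destruct (Hb _ He') as [[u1 [Hu1 Hd1]] [u2 [Hu2 Hd2]]].
  assert (Hm : forall u, pdist z u < eps / c -> pdist (dilate c z) (dilate c u) < eps).
  { intros u Hu. rewrite pdist_dilate by lra.
    assert (c * (eps / c) = eps) by (field; lra).
    assert (c * pdist z u < c * (eps / c)) by (apply Rmult_lt_compat_l; auto). lra. }
  split.
  - exists (dilate c u1). split; [apply Hinv; auto|auto].
  - exists (dilate c u2). split; [rewrite (Hinv c u2 Hc); exact Hu2|auto].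
Qed.

Lemma dG_dilate (U : pt -> Prop) c x : dilation_invariant U -> 0 < c ->
  dG U (dilate c x) = c * dG U x.
Proof.
  intros Hinv Hc. unfold dG.
  rewrite <- Rinf_scale by (exact Hc || (intros d [z [_ ->]]; apply pdist_ge0)).
  f_equal. apply functional_extensionality. intros d. apply propositional_extensionality. split.
  - intros [z [Hz ->]]. exists (pdist x (dilate (/ c) z)). split.
    + exists (dilate (/ c) z). split; [|reflexivity].
      apply boundary_dilate; [exact Hinv|apply Rinv_0_lt_compat, Hc|exact Hz].
    + rewrite <- pdist_dilate, dilate_dilate, Rinv_r, dilate1; lra.
  - intros [u [[z [Hz ->]] ->]]. exists (dilate c z). split.
    + apply boundary_dilate; assumption.
    + rewrite pdist_dilate; lra.
Qed.

(* Near the common boundary point [origin], the nearest boundary point of [G] is within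
   [pdist x origin], hence inside the ball where [G] and [S] coincide. *)
Lemma dG_eq_near_origin (G S : pt -> Prop) r x : is_open G -> is_open S ->
  boundary S origin -> (forall z, G z -> S z) ->
  (forall z, pdist z origin < r -> (G z <-> S z)) ->
  G x -> pdist x origin < r / 2 -> dG G x = dG S x.
Proof.
  intros HoG HoS HbS Hsub Hr Hx Hxr.
  apply Rle_antisym; [apply dG_le_sub; eauto|]. apply Rinf_le.
  - intros d [z [_ ->]]. apply pdist_ge0.
  - destruct (boundary_exists_of_sub G S x origin) as [w Hw]; auto.
    exists (pdist x w), w. auto.
  - intros v [w [Hw ->]].
    destruct (Rle_or_lt (pdist x origin) (pdist x w)) as [L|L].
    + exists (pdist x origin). split; [exists origin; auto|exact L].
    + assert (Hwr : pdist w origin < r).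
      { pose proof (pdist_triangle w origin x). rewrite (pdist_sym w x) in H.
        pose proof (pdist_ge0 x origin). lra. }
      assert (~ S w) by (rewrite <- (Hr w Hwr); apply (boundary_notin_open G w HoG Hw)).
      destruct (boundary_on_segment S x w HoS (Hsub x Hx) H) as [z [Hz Hle]].
      exists (pdist x z). split; [exists z; auto|exact Hle].
Qed.

Lemma rsum_ext f g n : (forall i, (i < n)%nat -> f i = g i) -> rsum f n = rsum g n.
Proof.
  induction n as [|n IH]; intros H; simpl; [reflexivity|].
  rewrite IH by (intros; apply H; lia). rewrite H by lia. reflexivity.
Qed.

Lemma rsum_le f g n : (forall i, (i < n)%nat -> f i <= g i) -> rsum f n <= rsum g n.
Proof.
  induction n as [|n IH]; intros H; simpl; [lra|].
  assert (rsum f n <= rsum g n) by (apply IH; intros; apply H; lia).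
  assert (f n <= g n) by (apply H; lia). lra.
Qed.

Lemma rsum_scale f c n : rsum (fun i => c * f i) n = c * rsum f n.
Proof. induction n as [|n IH]; simpl; [ring|]. rewrite IH. ring. Qed.

Lemma rsum_ge0 f n : (forall i, (i < n)%nat -> 0 <= f i) -> 0 <= rsum f n.
Proof.
  intros H. replace 0 with (rsum (fun _ => 0) n); [now apply rsum_le|].
  clear H. induction n as [|n IH]; simpl; [reflexivity|]. rewrite IH. ring.
Qed.

Lemma partition_mono P n : partition P n ->
  forall i k, (i + k <= n)%nat -> P i <= P (i + k)%nat.
Proof.
  intros [_ [_ Hm]] i k. induction k as [|k IH]; intros Hk; [rewrite Nat.add_0_r; lra|].
  replace (i + S k)%nat with (S (i + k)) by lia.
  assert (P (i + k)%nat <= P (S (i + k))) by (apply Hm; lia).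
  specialize (IH ltac:(lia)). lra.
Qed.

Lemma partition_range P n : partition P n -> forall i, (i <= n)%nat -> 0 <= P i <= 1.
Proof.
  intros Hp i Hi. pose proof (partition_mono P n Hp) as Hm. destruct Hp as [H0 [H1 _]].
  split.
  - pose proof (Hm 0%nat i ltac:(lia)) as H. simpl in H. lra.
  - pose proof (Hm i (n - i)%nat ltac:(lia)) as H.
    replace (i + (n - i))%nat with n in H by lia. lra.
Qed.

Definition trivial_partition (i : nat) : R := match i with O => 0 | _ => 1 end.

Lemma partition_trivial : partition trivial_partition 1.
Proof. repeat split. intros i Hi. destruct i; simpl; [lra|lia]. Qed.

Lemma lower_sum_ge0 f gamma P n : (forall z, 0 <= f z) -> 0 <= lower_sum f gamma P n.
Proof.
  intros H. apply rsum_ge0. intros i _.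
  apply Rmult_le_pos; [|apply pdist_ge0]. apply Rinf_ge0. intros v [t [_ ->]]. apply H.
Qed.

Lemma line_integral_ge0 f gamma v :
  (forall z, 0 <= f z) -> line_integral f gamma = Some v -> 0 <= v.
Proof.
  intros H Hv. apply sup_opt_SomeP in Hv as [[Hu _] _].
  apply Rle_trans with (lower_sum f gamma trivial_partition 1); [now apply lower_sum_ge0|].
  apply Hu. exists trivial_partition, 1%nat. split; [exact partition_trivial|reflexivity].
Qed.

Lemma lower_sum_le f g gamma P n : partition P n ->
  (forall t, 0 <= t <= 1 -> 0 <= g (gamma t) <= f (gamma t)) ->
  lower_sum g gamma P n <= lower_sum f gamma P n.
Proof.
  intros Hp H. apply rsum_le. intros i Hi.
  pose proof (partition_range P n Hp i ltac:(lia)).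
  pose proof (partition_range P n Hp (S i) ltac:(lia)).
  assert (P i <= P (S i)) by (apply Hp; exact Hi).
  apply Rmult_le_compat_r; [apply pdist_ge0|]. apply Rinf_le.
  - intros v [t [Ht ->]]. apply H. lra.
  - exists (f (gamma (P i))), (P i). split; [lra|reflexivity].
  - intros v [t [Ht ->]]. exists (g (gamma t)). split; [exists t; auto|]. apply H. lra.
Qed.

Lemma line_integral_le f g gamma v :
  (forall t, 0 <= t <= 1 -> 0 <= g (gamma t) <= f (gamma t)) ->
  line_integral f gamma = Some v -> exists w, line_integral g gamma = Some w /\ w <= v.
Proof.
  intros H Hv. eapply sup_opt_le; [| |exact Hv].
  - exists (lower_sum g gamma trivial_partition 1), trivial_partition, 1%nat.
    split; [exact partition_trivial|reflexivity].
  - intros u [P [n [Hp ->]]]. exists (lower_sum f gamma P n). split.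
    + exists P, n. auto.
    + now apply lower_sum_le.
Qed.

(* The weight [1 / dG U] scales like [1 / c] while chord lengths scale like [c]. *)
Lemma lower_sum_dilate (U : pt -> Prop) c gamma P n : dilation_invariant U -> 0 < c ->
  lower_sum (fun z => / dG U z) (fun t => dilate c (gamma t)) P n =
  lower_sum (fun z => / dG U z) gamma P n.
Proof.
  intros Hinv Hc. apply rsum_ext. intros i _. rewrite pdist_dilate by lra.
  replace (fun v => exists t, P i <= t <= P (S i) /\ v = / dG U (dilate c (gamma t)))
    with (fun v => exists u, (exists t, P i <= t <= P (S i) /\ u = / dG U (gamma t)) /\ v = / c * u).
  - rewrite Rinf_scale.
    + field. lra.
    + apply Rinv_0_lt_compat, Hc.
    + intros u [t [_ ->]]. apply Rinv_ge0, dG_ge0.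
  - apply functional_extensionality. intros v. apply propositional_extensionality.
    split.
    + intros [u [[t [Ht ->]] ->]]. exists t. split; [exact Ht|].
      now rewrite dG_dilate, Rinv_mult.
    + intros [t [Ht ->]]. exists (/ dG U (gamma t)). split; [exists t; auto|].
      now rewrite dG_dilate, Rinv_mult.
Qed.

Lemma line_integral_dilate (U : pt -> Prop) c gamma : dilation_invariant U -> 0 < c ->
  line_integral (fun z => / dG U z) (fun t => dilate c (gamma t)) =
  line_integral (fun z => / dG U z) gamma.
Proof.
  intros Hinv Hc. unfold line_integral. f_equal.
  apply functional_extensionality. intros v. apply propositional_extensionality.
  split; intros [P [n [Hp ->]]]; exists P, n; split; auto; now rewrite lower_sum_dilate.
Qed.

Lemma curve_in_dilate (U V : pt -> Prop) gamma x y c : 0 < c ->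
  (forall z, U z -> V (dilate c z)) -> curve_in U gamma x y ->
  curve_in V (fun t => dilate c (gamma t)) (dilate c x) (dilate c y).
Proof.
  intros Hc HUV [H0 [H1 [HU Hcont]]]. repeat split.
  - now rewrite H0.
  - now rewrite H1.
  - intros t Ht. apply HUV, HU, Ht.
  - intros t Ht eps He.
    destruct (Hcont t Ht (eps / c)) as [delta [Hd Hs]]; [apply Rdiv_lt_0_compat; lra|].
    exists delta. split; [exact Hd|]. intros s Hs1 Hs2. rewrite pdist_dilate by lra.
    specialize (Hs s Hs1 Hs2).
    assert (c * (eps / c) = eps) by (field; lra).
    assert (c * pdist (gamma s) (gamma t) < c * (eps / c)) by (apply Rmult_lt_compat_l; auto).
    lra.
Qed.

Lemma rectifiable_dilate gamma c : 0 <= c -> rectifiable gamma ->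
  rectifiable (fun t => dilate c (gamma t)).
Proof.
  intros Hc [M HM]. exists (c * M). intros P n Hp. unfold chord_sum.
  rewrite (rsum_ext _ (fun i => c * pdist (gamma (P i)) (gamma (P (S i))))).
  - rewrite rsum_scale. apply Rmult_le_compat_l; [exact Hc|]. now apply HM.
  - intros i _. now apply pdist_dilate.
Qed.

Definition qh_admissible (G : pt -> Prop) (A : R) : Prop :=
  1 <= A /\ forall x y, G x -> G y -> er_le (k_G G x y) (Some (A * j_G G x y)).

Lemma A_G_le_of_admissible (U V : pt -> Prop) :
  (forall A, qh_admissible V A -> qh_admissible U A) -> er_le (A_G U) (A_G V).
Proof.
  intros HVU. unfold A_G. fold (qh_admissible U) (qh_admissible V).
  destruct (inf_opt (qh_admissible V)) as [a|] eqn:Ha;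
    [|destruct (inf_opt (qh_admissible U)); exact I].
  destruct (inf_opt_le (qh_admissible U) (qh_admissible V) 1 a) as [c [-> Hle]].
  - intros A [H _]. exact H.
  - intros A HA. exists A. split; [now apply HVU|lra].
  - exact Ha.
  - exact Hle.
Qed.

Lemma dilate_into_ball r x y : 0 < r -> exists lam, 0 < lam /\
  pdist (dilate lam x) origin < r / 2 /\ pdist (dilate lam y) origin < r / 2.
Proof.
  intros Hr. set (R0 := 1 + pdist x origin + pdist y origin).
  pose proof (pdist_ge0 x origin). pose proof (pdist_ge0 y origin).
  exists (r / (4 * R0)).
  assert (Hl : 0 < r / (4 * R0)) by (apply Rdiv_lt_0_compat; unfold R0; lra).
  assert (HlR : r / (4 * R0) * R0 = r / 4) by (field; unfold R0; lra).
  rewrite <- (dilate_origin (r / (4 * R0))), !pdist_dilate by lra.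
  assert (r / (4 * R0) * pdist x origin <= r / (4 * R0) * R0)
    by (apply Rmult_le_compat_l; [lra|unfold R0; lra]).
  assert (r / (4 * R0) * pdist y origin <= r / (4 * R0) * R0)
    by (apply Rmult_le_compat_l; [lra|unfold R0; lra]).
  repeat split; lra.
Qed.

Section ConeDomain.

Variable S : pt -> Prop.
Hypothesis S_open : is_open S.
Hypothesis S_invariant : dilation_invariant S.
Hypothesis S_origin : boundary S origin.

(* Shrink a curve of [G] by [1 / lam]: the weight only decreases ([dG G <= dG S]) and
   the [S]-integral is dilation invariant. *)
Lemma k_le_k_dilate (G : pt -> Prop) lam x y c : is_open G -> (forall z, G z -> S z) ->
  0 < lam -> k_G G (dilate lam x) (dilate lam y) = Some c ->
  exists c', k_G S x y = Some c' /\ c' <= c.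
Proof.
  intros HoG Hsub Hl Hk. refine (inf_opt_le _ _ 0 c _ _ Hk).
  - intros v [g [_ [_ Hli]]]. eapply line_integral_ge0; [|exact Hli].
    intros z. apply Rinv_ge0, dG_ge0.
  - intros v [g [Hg [Hrect Hli]]].
    destruct (line_integral_le (fun z => / dG G z) (fun z => / dG S z) g v)
      as [w [Hw Hle]]; [|exact Hli|].
    { intros t Ht. assert (HG := proj1 (proj2 (proj2 Hg)) t Ht). split.
      - apply Rinv_ge0, dG_ge0.
      - apply Rinv_le_contravar.
        + apply dG_gt0; [exact HoG|exact HG|].
          now apply (boundary_exists_of_sub G S (g t) origin).
        + apply dG_le_sub; [exact HoG|exact S_open|exact Hsub|exact HG|now exists origin]. }
    assert (Hmu : 0 < / lam) by (apply Rinv_0_lt_compat, Hl).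
    exists w. split; [|exact Hle]. exists (fun t => dilate (/ lam) (g t)). split; [|split].
    + rewrite <- (dilateK lam x), <- (dilateK lam y) by lra.
      apply (curve_in_dilate G); [exact Hmu| |exact Hg].
      intros z Hz. apply S_invariant, Hsub, Hz. exact Hmu.
    + apply rectifiable_dilate; [lra|exact Hrect].
    + now rewrite line_integral_dilate.
Qed.

Lemma j_dilate lam x y : 0 < lam -> S x -> S y ->
  j_G S (dilate lam x) (dilate lam y) = j_G S x y.
Proof.
  intros Hl Hx Hy. unfold j_G.
  rewrite !dG_dilate, Rmin_mult_l, pdist_dilate by (assumption || lra).
  assert (0 < dG S x) by (apply dG_gt0; eauto).
  assert (0 < dG S y) by (apply dG_gt0; eauto).
  assert (0 < Rmin (dG S x) (dG S y)) by (apply Rmin_glb_lt; assumption).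
  f_equal. field. lra.
Qed.

Lemma qh_admissible_of_subdomain (G : pt -> Prop) r A : is_open G ->
  (forall z, G z -> S z) -> 0 < r -> (forall z, pdist z origin < r -> (G z <-> S z)) ->
  qh_admissible G A -> qh_admissible S A.
Proof.
  intros HoG Hsub Hr Hloc [H1 HAG]. split; [exact H1|]. intros x y Hx Hy.
  destruct (dilate_into_ball r x y Hr) as [lam [Hl [Hxr Hyr]]].
  assert (Gx : G (dilate lam x)) by (apply Hloc; [lra|apply S_invariant; assumption]).
  assert (Gy : G (dilate lam y)) by (apply Hloc; [lra|apply S_invariant; assumption]).
  assert (Hj : j_G G (dilate lam x) (dilate lam y) = j_G S x y).
  { rewrite <- j_dilate with (lam := lam) by assumption. unfold j_G.
    now rewrite !(dG_eq_near_origin G S r). }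
  specialize (HAG _ _ Gx Gy). rewrite Hj in HAG.
  destruct (k_G G (dilate lam x) (dilate lam y)) as [c|] eqn:Hk; [|contradiction].
  destruct (k_le_k_dilate G lam x y c HoG Hsub Hl Hk) as [c' [-> Hc']].
  simpl in *. lra.
Qed.

End ConeDomain.

Theorem theorem5p2 (alpha : R) (G : pt -> Prop) (r : R) :
  0 < alpha < PI ->
  domain G ->
  (forall z, G z -> sector alpha z) ->
  0 < r ->
  (forall z, pdist z origin < r -> (G z <-> sector alpha z)) ->
  er_le (A_G (sector alpha)) (A_G G).
Proof.
  intros Ha [_ [HoG _]] Hsub Hr Hloc.
  apply A_G_le_of_admissible. intros A HA.
  apply (qh_admissible_of_subdomain (sector alpha) (sector_open alpha Ha)
           (sector_dilation_invariant alpha Ha) (boundary_sector_origin alpha Ha) G r);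
    assumption.
Qed.
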